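(* Let $1\le p<\infty$ and let $X$ be a maximal sequence space. The following are equivalent: (1) $X$ is $p$-convex. (2) There exist a norm $\|\cdot\|_p$ on the sequence space $X_p:=\{\tau\in\ell_\infty:\ |\tau|^{1/p}\in X\}$ and a constant $c>0$ such that for all $\sigma\in X$ \[\frac1c\|\sigma\|_X\le \big\|\,|\sigma|^p\big\|_p^{1/p}\le\|\sigma\|_X .\] (3) There exists a maximal sequence space $Y$ such that $X={\rm ID}\mathcal L(Y,\ell_p)$ as sets, with equivalent norms. Moreover, in this case one can choose $Y={\rm ID}\mathcal L(X,\ell_p)$, and then for every $\sigma\in X$ \[\frac{1}{M^p(X)}\|\sigma\|_X\le \|D_\sigma:Y\to\ell_p\|\le\|\sigma\|_X .\]
   Context: All sequences are scalar sequences indexed by $\mathbb N$; $(e_k)$ denotes the unit vectors, and for a sequence $\sigma$ and $n\in\mathbb N$, $P_n\sigma:=\sum_{k=1}^n\sigma_ke_k$. A maximal sequence space is a Banach space $(X,\|\cdot\|_X)$ of scalar sequences such that: (i) $\ell_1\subset X\subset\ell_\infty$ and $\|e_k\|_X=1$ for all $k$; (ii) if $\sigma\in X$ and $\alpha\in\ell_\infty$ then the pointwise product $\alpha\sigma\in X$ with $\|\alpha\sigma\|_X\le\|\alpha\|_\infty\|\sigma\|_X$; (iii) $\sigma\in X$ if and only if $\sup_n\|P_n\sigma\|_X<\infty$, and in this case $\|\sigma\|_X=\sup_n\|P_n\sigma\|_X$. For $1\le p<\infty$, a maximal sequence space $X$ is $p$-convex if there is $c>0$ such that for all $n$ and $x_1,\dots,x_n\in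 X$, $\|(\sum_{k=1}^n|x_k|^p)^{1/p}\|_X\le c(\sum_{k=1}^n\|x_k\|_X^p)^{1/p}$ (pointwise operations); the least such $c$ is denoted $M^p(X)$. For maximal sequence spaces $X,Y$, ${\rm ID}\mathcal L(X,Y)$ denotes the space of sequences $\sigma$ such that the diagonal operator $D_\sigma(\tau)=(\sigma_k\tau_k)_k$ maps $X$ boundedly into $Y$, normed by the operator norm $\|D_\sigma:X\to Y\|$. $|\sigma|^r$ denotes the sequence $(|\sigma_k|^r)_k$. *)

From mathcomp Require Import all_boot all_order all_algebra.
From mathcomp Require Import all_classical all_reals all_analysis.
Set Implicit Arguments. Unset Strict Implicit. Unset Printing Implicit Defensive.
Import Order.TTheory GRing.Theory Num.Theory.
Local Open Scope classical_set_scope.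
Local Open Scope ring_scope.

(* Sequences are functions nat -> R; index 0 plays the role of the first index. *)

Definition bounded_seq {R : realType} (a : nat -> R) : Prop :=
  exists M : R, forall k, `|a k| <= M.

Definition ell1 {R : realType} (a : nat -> R) : Prop :=
  exists M : R, forall n, \sum_(k < n) `|a k| <= M.

Definition unit_vec {R : realType} (k : nat) : nat -> R :=
  fun j => if j == k then 1 else 0.

Definition proj_seq {R : realType} (n : nat) (s : nat -> R) : nat -> R :=
  fun k => if (k < n)%N then s k else 0.

Definition is_normed_seq_space {R : realType} (X : set (nat -> R))
    (nrm : (nat -> R) -> R) : Prop :=
  X (fun _ => 0) /\
  (forall x y, X x -> X y -> X (fun k => x k + y k)) /\
  (forall (a : R) x, X x -> X (fun k => a * x k)) /\
  (forall x, X x -> 0 <= nrm x) /\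
  (forall x, X x -> nrm x = 0 -> x = (fun _ => 0)) /\
  (forall (a : R) x, X x -> nrm (fun k => a * x k) = `|a| * nrm x) /\
  (forall x y, X x -> X y -> nrm (fun k => x k + y k) <= nrm x + nrm y).

Definition is_complete_seq_space {R : realType} (X : set (nat -> R))
    (nrm : (nat -> R) -> R) : Prop :=
  forall u : nat -> nat -> R, (forall n, X (u n)) ->
  (forall e : R, 0 < e -> exists N, forall m n, (N <= m)%N -> (N <= n)%N ->
       nrm (fun k => u m k - u n k) < e) ->
  exists x, X x /\ (forall e : R, 0 < e -> exists N, forall n, (N <= n)%N ->
       nrm (fun k => u n k - x k) < e).

Definition maximal_seq_space {R : realType} (X : set (nat -> R))
    (nrm : (nat -> R) -> R) : Prop :=
  is_normed_seq_space X nrm /\ is_complete_seq_space X nrm /\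
  (forall s, ell1 s -> X s) /\ (forall s, X s -> bounded_seq s) /\
  (forall k, nrm (unit_vec k) = 1) /\
  (* (ii): for every bound M of |alpha| (so in particular M = ||alpha||_oo) *)
  (forall (a s : nat -> R) (M : R), X s -> (forall k, `|a k| <= M) ->
      X (fun k => a k * s k) /\ nrm (fun k => a k * s k) <= M * nrm s) /\
  (forall s, X s <-> exists M : R, forall n, nrm (proj_seq n s) <= M) /\
  (forall s, X s ->
     (forall n, nrm (proj_seq n s) <= nrm s) /\
     (forall M : R, (forall n, nrm (proj_seq n s) <= M) -> nrm s <= M)).

Definition pconvex_const {R : realType} (X : set (nat -> R))
    (nrm : (nat -> R) -> R) (p c : R) : Prop :=
  0 < c /\
  forall (n : nat) (xs : nat -> nat -> R), (forall i, (i < n)%N -> X (xs i)) ->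
    nrm (fun j => (\sum_(i < n) `|xs i j| `^ p) `^ p^-1)
      <= c * (\sum_(i < n) nrm (xs i) `^ p) `^ p^-1.

Definition pconvex {R : realType} (X : set (nat -> R))
    (nrm : (nat -> R) -> R) (p : R) : Prop :=
  exists c, pconvex_const X nrm p c.

Definition Mp {R : realType} (X : set (nat -> R))
    (nrm : (nat -> R) -> R) (p : R) : R :=
  inf [set c | pconvex_const X nrm p c].

Definition Xpow {R : realType} (X : set (nat -> R)) (p : R) : set (nat -> R) :=
  [set t | bounded_seq t /\ X (fun k => `|t k| `^ p^-1)].

Definition ellp {R : realType} (p : R) (x : nat -> R) : Prop :=
  exists M : R, forall n, \sum_(k < n) `|x k| `^ p <= M.

Definition lp_norm {R : realType} (p : R) (x : nat -> R) : R :=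
  (sup [set (\sum_(k < n) `|x k| `^ p) | n in [set: nat]]) `^ p^-1.

Definition IDL {R : realType} (Y : set (nat -> R)) (nY : (nat -> R) -> R)
    (p : R) : set (nat -> R) :=
  [set s | (forall t, Y t -> ellp p (fun k => s k * t k)) /\
           exists C : R, forall t, Y t ->
             lp_norm p (fun k => s k * t k) <= C * nY t].

Definition opnorm {R : realType} (Y : set (nat -> R)) (nY : (nat -> R) -> R)
    (p : R) (s : nat -> R) : R :=
  sup [set lp_norm p (fun k => s k * t k) | t in [set t | Y t /\ nY t <= 1]].

From mathcomp Require Import all_boot all_order all_algebra.
From mathcomp Require Import all_classical all_reals all_analysis.
From mathcomp Require Import ring lra.
Set Implicit Arguments. Unset Strict Implicit. Unset Printing Implicit Defensive.
Import Order.TTheory GRing.Theory Num.Theory numFieldNormedType.Exports.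
Local Open Scope classical_set_scope.
Local Open Scope ring_scope.

(* (1) => (2): the p-concavification
     ||tau||_p = inf { sum_i ||x_i|| ^ p : |tau| <= sum_i |x_i| ^ p }
   is a norm on X_p, and p-convexity with constant c bounds it below by
   (|| |tau| ^ (1/p) || / c) ^ p.  Conversely, the triangle inequality of a
   norm on X_p, or Minkowski's inequality in l_p for (3), applied to
   sum_i |x_i| ^ p gives p-convexity.
   (1) => (3) with Y = ID L(X, l_p), which is again maximal: X embeds into
   ID L(Y, l_p) with norm at most ||.||_X by the symmetry of the pairing.
   For the reverse bound, fix n and apply finite-dimensional Hahn-Banach to
   the sublinear functional y |-> ||P_n y||_p at |s| ^ p: this gives weights
   psi_k >= 0 with sum_{k<n} psi_k |x_k| ^ p <= ||x|| ^ p on X and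
   (||P_n s|| / c) ^ p <= sum_{k<n} psi_k |s_k| ^ p.  Hence psi ^ (1/p) lies
   in the unit ball of Y and ||P_n s|| <= c ||D_s : Y -> l_p||, and the
   Fatou property (iii) of X finishes the argument. *)

Section RealPowers.
Variable R : realType.
Implicit Types (p a b : R) (n : nat) (f g : nat -> R).

Lemma powRK p a : p != 0 -> 0 <= a -> (a `^ p) `^ p^-1 = a.
Proof. by move=> p0 a0; rewrite -powRrM mulfV // powRr1. Qed.

Lemma powRVK p a : p != 0 -> 0 <= a -> (a `^ p^-1) `^ p = a.
Proof. by move=> p0 a0; rewrite -powRrM mulVf // powRr1. Qed.

Lemma norm_powRK p a : 0 < p -> (`|a| `^ p) `^ p^-1 = `|a|.
Proof. by move=> p0; rewrite powRK ?gt_eqF. Qed.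

Lemma ge0_ler_powR2 p a b : 0 <= p -> 0 <= a -> a <= b -> a `^ p <= b `^ p.
Proof. by move=> p0 a0 ab; apply: ge0_ler_powR; rewrite // nnegrE (le_trans a0). Qed.

Lemma ler_powR2 p a b : 0 < p -> 0 <= a -> 0 <= b -> (a `^ p <= b `^ p) = (a <= b).
Proof.
move=> p0 a0 b0; apply/idP/idP; last exact: ge0_ler_powR2 (ltW p0) a0.
move=> h; rewrite -(powRK (lt0r_neq0 p0) a0) -(powRK (lt0r_neq0 p0) b0).
by apply: ge0_ler_powR2 => //; rewrite ?invr_ge0 ?powR_ge0 ?(ltW p0).
Qed.

Lemma ler_powRV p a b : 0 < p -> 0 <= a -> 0 <= b -> (a `^ p^-1 <= b) = (a <= b `^ p).
Proof.
move=> p0 a0 b0.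
by rewrite -(ler_powR2 p0 (powR_ge0 a p^-1) b0) powRVK ?gt_eqF.
Qed.

(* Writing [a = (a + b) x] and [b = (a + b) y] with [x + y = 1], this
   reduces to [x ^ p <= x] on [[0, 1]]. *)
Lemma powR_superadditive p a b : 1 <= p -> 0 <= a -> 0 <= b ->
  a `^ p + b `^ p <= (a + b) `^ p.
Proof.
move=> p1 a0 b0; have p0 : p != 0 by rewrite gt_eqF // (lt_le_trans ltr01).
have [ab0|abp] := eqVneq (a + b) 0.
  have -> : a = 0 by lra.
  have -> : b = 0 by lra.
  by rewrite addr0 powR0 // addr0.
have ab_ge0 : 0 <= a + b by rewrite addr_ge0.
have ab_gt0 : 0 < a + b by rewrite lt_neqAle eq_sym abp ab_ge0.
have powR_le_id x : 0 <= x -> x <= 1 -> x `^ p <= x.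
  move=> x0 x1; have [->|xn0] := eqVneq x 0; first by rewrite powR0.
  by apply: ge1r_powR; rewrite // lt_neqAle eq_sym xn0 x0.
have x0 : 0 <= a / (a + b) by rewrite divr_ge0.
have y0 : 0 <= b / (a + b) by rewrite divr_ge0.
have x1 : a / (a + b) <= 1 by rewrite ler_pdivrMr // mul1r lerDl.
have y1 : b / (a + b) <= 1 by rewrite ler_pdivrMr // mul1r lerDr.
have key : (a + b) `^ p * ((a / (a + b)) `^ p + (b / (a + b)) `^ p) <= (a + b) `^ p.
  rewrite -[X in _ <= X]mulr1 ler_wpM2l ?powR_ge0 //.
  apply: le_trans (lerD (powR_le_id _ x0 x1) (powR_le_id _ y0 y1)) _.
  by rewrite -mulrDl divff.
by rewrite mulrDr -!powRM // !(mulrC (a + b)) !divfK in key.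
Qed.

Lemma sum_powR_le p n f : 1 <= p -> (forall k, 0 <= f k) ->
  \sum_(k < n) f k `^ p <= (\sum_(k < n) f k) `^ p.
Proof.
move=> p1 f0; elim: n => [|n IH].
  by rewrite !big_ord0 powR0 // gt_eqF // (lt_le_trans ltr01).
rewrite !big_ord_recr /=; apply: le_trans (powR_superadditive p1 _ _) => //.
  by rewrite lerD2r.
exact: sumr_ge0.
Qed.

Lemma root_sum_powR_le p n f : 1 <= p -> (forall k, 0 <= f k) ->
  (\sum_(k < n) f k `^ p) `^ p^-1 <= \sum_(k < n) f k.
Proof.
move=> p1 f0; have p0 : 0 < p by apply: lt_le_trans p1.
rewrite ler_powRV ?sumr_ge0 // => *; [exact: sum_powR_le | exact: powR_ge0].
Qed.

Lemma powRV_subadditive p a b : 1 <= p -> 0 <= a -> 0 <= b ->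
  (a + b) `^ p^-1 <= a `^ p^-1 + b `^ p^-1.
Proof.
move=> p1 a0 b0; have p0 : 0 < p by apply: lt_le_trans p1.
rewrite ler_powRV ?addr_ge0 ?powR_ge0 //.
have := powR_superadditive p1 (powR_ge0 a p^-1) (powR_ge0 b p^-1).
by rewrite !powRVK ?gt_eqF.
Qed.

Lemma sum_powR_norm_eq0 p n f : 0 < p -> \sum_(k < n) `|f k| `^ p = 0 ->
  forall k, (k < n)%N -> f k = 0.
Proof.
move=> p0 /psumr_eq0P h k kn.
have /(_ (Ordinal kn) isT) /powR_eq0_eq0/normr0_eq0 // := h (fun i _ => powR_ge0 _ _).
Qed.

(* For [A, B > 0] each [|f k + g k|] is at most [A + B] times a convex
   combination of [|f k| / A] and [|g k| / B]; the convexity of [x ^ p] does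
   the rest. *)
Lemma minkowski_sum_pos p n f g (A B : R) : 1 <= p -> 0 < A -> 0 < B ->
  \sum_(k < n) `|f k| `^ p = A `^ p -> \sum_(k < n) `|g k| `^ p = B `^ p ->
  \sum_(k < n) `|f k + g k| `^ p <= (A + B) `^ p.
Proof.
move=> p1 Ap Bp eA eB; have p0 : 0 < p by apply: lt_le_trans p1.
have [A0 B0] := (ltW Ap, ltW Bp); have ABp := addr_gt0 Ap Bp; have AB0 := ltW ABp.
have unit_sum (h : nat -> R) (C : R) : 0 < C -> \sum_(k < n) `|h k| `^ p = C `^ p ->
    \sum_(k < n) (`|h k| / C) `^ p = 1.
  move=> C0 eC; have C0' := ltW C0.
  under eq_bigr do rewrite powRM ?invr_ge0 //.
  by rewrite -mulr_suml eC -powRM ?invr_ge0 // divff ?gt_eqF // powR1.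
set l := A / (A + B); have el : l = A / (A + B) by []; clearbody l.
have l0 : 0 <= l by rewrite el divr_ge0.
have l1 : l <= 1 by rewrite el ler_pdivrMr // mul1r lerDl.
have convex_step x y : 0 <= x -> 0 <= y ->
    (l * x + (1 - l) * y) `^ p <= l * x `^ p + (1 - l) * y `^ p.
  move=> x0 y0; have := convex_powR p1 (Itv01 l0 l1) (x := x) (y := y).
  by rewrite !inE /= !in_itv /= !andbT => /(_ x0 y0); rewrite !convRE.
apply: (@le_trans _ _ (\sum_(k < n) (A + B) `^ p *
    (l * (`|f k| / A) `^ p + (1 - l) * (`|g k| / B) `^ p))).
  apply: ler_sum => k _.
  have [fA gB] := (divr_ge0 (normr_ge0 (f k)) A0, divr_ge0 (normr_ge0 (g k)) B0).
  apply: le_trans (ler_wpM2l (powR_ge0 _ _) (convex_step _ _ fA gB)).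
  have comb0 : 0 <= l * (`|f k| / A) + (1 - l) * (`|g k| / B).
    by rewrite addr_ge0 // mulr_ge0 // subr_ge0.
  rewrite -(powRM _ AB0 comb0); apply: ge0_ler_powR2 (ltW p0) _ _ => //.
  have -> : (A + B) * (l * (`|f k| / A) + (1 - l) * (`|g k| / B)) = `|f k| + `|g k|.
    by rewrite el; field; rewrite !gt_eqF.
  exact: ler_normD.
rewrite -mulr_sumr big_split /= -!mulr_sumr.
by rewrite !unit_sum // !mulr1 subrKC mulr1.
Qed.

Lemma minkowski_sum p n f g : 1 <= p ->
  (\sum_(k < n) `|f k + g k| `^ p) `^ p^-1 <=
  (\sum_(k < n) `|f k| `^ p) `^ p^-1 + (\sum_(k < n) `|g k| `^ p) `^ p^-1.
Proof.
move=> p1; have p0 : 0 < p by apply: lt_le_trans p1.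
have sum_ge0 (h : nat -> R) : 0 <= \sum_(k < n) `|h k| `^ p.
  by apply: sumr_ge0 => *; apply: powR_ge0.
have trivial_case (h h' : nat -> R) : \sum_(k < n) `|h k| `^ p = 0 ->
    \sum_(k < n) `|h k + h' k| `^ p = \sum_(k < n) `|h' k| `^ p.
  move=> hsum; apply: eq_bigr => k _.
  by rewrite (sum_powR_norm_eq0 p0 hsum (ltn_ord k)) add0r.
have root_gt0 (h : nat -> R) : \sum_(k < n) `|h k| `^ p != 0 ->
    0 < (\sum_(k < n) `|h k| `^ p) `^ p^-1.
  by move=> hn0; rewrite powR_gt0 // lt_neqAle eq_sym hn0 sum_ge0.
have [f0|fn0] := eqVneq (\sum_(k < n) `|f k| `^ p) 0.
  by rewrite trivial_case // f0 powR0 ?invr_eq0 ?gt_eqF // add0r.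
have [g0|gn0] := eqVneq (\sum_(k < n) `|g k| `^ p) 0.
  under eq_bigr do rewrite addrC.
  by rewrite trivial_case // g0 powR0 ?invr_eq0 ?gt_eqF // addr0.
rewrite (ler_powRV p0 (sum_ge0 (fun k => f k + g k))); last by rewrite addr_ge0 ?powR_ge0.
by apply: minkowski_sum_pos; rewrite ?root_gt0 // powRVK ?sum_ge0 // gt_eqF.
Qed.

End RealPowers.

Section Sequences.
Variable R : realType.
Implicit Types (f s : nat -> R) (n m k j : nat).

Lemma unit_vec_neq k j : j != k -> @unit_vec R k j = 0.
Proof. by rewrite /unit_vec => /negbTE ->. Qed.

Lemma proj_seq_id n s : proj_seq n (proj_seq n s) = proj_seq n s.
Proof. by apply: funext => k; rewrite /proj_seq; case: (k < n)%N. Qed.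

Lemma sum_le_finsupp f n m : (forall k, 0 <= f k) -> (forall k, (n <= k)%N -> f k = 0) ->
  \sum_(k < m) f k <= \sum_(k < n) f k.
Proof.
move=> f0 fz; rewrite -!(big_mkord xpredT f).
have [mn|nm] := leqP m n.
  by rewrite (big_cat_nat (leq0n m) mn) /= lerDl sumr_ge0.
rewrite (big_cat_nat (leq0n n) (ltnW nm)) /=.
have -> : \sum_(n <= i < m) f i = 0.
  by rewrite big_nat_cond big1 // => i /andP[/andP[ni _] _]; apply: fz.
by rewrite addr0.
Qed.

Lemma ell1_finsupp n s : (forall k, (n <= k)%N -> s k = 0) -> ell1 s.
Proof.
move=> sz; exists (\sum_(k < n) `|s k|) => m.
by apply: (@sum_le_finsupp (fun k => `|s k|)) => // k nk; rewrite sz // normr0.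
Qed.

Lemma sum_norm_unit_vec_le1 k n : \sum_(j < n) `|@unit_vec R k j| <= 1.
Proof.
apply: le_trans (@sum_le_finsupp (fun j => `|unit_vec k j|) k.+1 n _ _) _.
- by move=> j; exact: normr_ge0.
- by move=> j kj; rewrite unit_vec_neq ?gtn_eqF // normr0.
rewrite big_ord_recr /= big1 ?add0r; first by rewrite /unit_vec eqxx normr1.
by move=> i _; rewrite unit_vec_neq ?ltn_eqF // normr0.
Qed.

Lemma ell1_unit_vec k : ell1 (@unit_vec R k).
Proof.
by exists 1 => n; exact: sum_norm_unit_vec_le1.
Qed.

Lemma ell1_proj_seq n s : ell1 (proj_seq n s).
Proof. by apply: (@ell1_finsupp n) => j nj; rewrite /proj_seq ltnNge nj. Qed.

End Sequences.

Section MaximalSequenceSpace.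
Variables (R : realType) (X : set (nat -> R)) (nrm : (nat -> R) -> R).
Hypothesis HX : maximal_seq_space X nrm.
Implicit Types (x y s : nat -> R) (a : R).

Lemma ms_mem0 : X (fun _ => 0).
Proof. by case: HX => [[]]. Qed.

Lemma ms_memD x y : X x -> X y -> X (fun k => x k + y k).
Proof. by case: HX => [[_ [h _]] _]; apply: h. Qed.

Lemma ms_memZ a x : X x -> X (fun k => a * x k).
Proof. by case: HX => [[_ [_ [h _]]] _]; apply: h. Qed.

Lemma ms_norm_ge0 x : X x -> 0 <= nrm x.
Proof. by case: HX => [[_ [_ [_ [h _]]]] _]; apply: h. Qed.

Lemma ms_norm_eq0 x : X x -> nrm x = 0 -> x = (fun _ => 0).
Proof. by case: HX => [[_ [_ [_ [_ [h _]]]]] _]; apply: h. Qed.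

Lemma ms_normZ a x : X x -> nrm (fun k => a * x k) = `|a| * nrm x.
Proof. by case: HX => [[_ [_ [_ [_ [_ [h _]]]]]] _]; apply: h. Qed.

Lemma ms_mem_ell1 s : ell1 s -> X s.
Proof. by case: HX => _ [_ [h _]]; apply: h. Qed.

Lemma ms_bounded s : X s -> bounded_seq s.
Proof. by case: HX => _ [_ [_ [h _]]]; apply: h. Qed.

Lemma ms_norm_unit_vec k : nrm (unit_vec k) = 1.
Proof. by case: HX => _ [_ [_ [_ [h _]]]]; apply: h. Qed.

Lemma ms_mul (al s : nat -> R) (M : R) : X s -> (forall k, `|al k| <= M) ->
  X (fun k => al k * s k) /\ nrm (fun k => al k * s k) <= M * nrm s.
Proof. by case: HX => _ [_ [_ [_ [_ [h _]]]]]; apply: h. Qed.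

Lemma ms_memP s : X s <-> exists M : R, forall n, nrm (proj_seq n s) <= M.
Proof. by case: HX => _ [_ [_ [_ [_ [_ [h _]]]]]]; apply: h. Qed.

Lemma ms_norm_le_proj s (M : R) : X s -> (forall n, nrm (proj_seq n s) <= M) -> nrm s <= M.
Proof. by case: HX => _ [_ [_ [_ [_ [_ [_ h]]]]]] /h [_]; apply. Qed.

Lemma ms_norm0 : nrm (fun _ => 0) = 0.
Proof.
have := ms_normZ 0 ms_mem0.
have -> : (fun k : nat => (0 : R) * 0) = fun _ => 0 by apply: funext => k; rewrite mul0r.
by rewrite normr0 mul0r.
Qed.

Lemma ms_solid x y : X y -> (forall k, `|x k| <= `|y k|) -> X x /\ nrm x <= nrm y.
Proof.
move=> Xy xy.
pose al k := if y k == 0 then 0 else x k / y k.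
have -> : x = (fun k => al k * y k).
  apply: funext => k; rewrite /al; case: eqP => [yk|/eqP yk]; last by rewrite divfK.
  by have := xy k; rewrite yk normr0 normr_le0 => /eqP ->; rewrite mul0r.
rewrite -[nrm y]mul1r; apply: ms_mul => // k; rewrite /al.
case: eqP => [_|/eqP yk]; first by rewrite normr0.
by rewrite normrM normfV ler_pdivrMr ?normr_gt0 // mul1r.
Qed.

Lemma ms_norm_abs x : X x -> X (fun k => `|x k|) /\ nrm (fun k => `|x k|) = nrm x.
Proof.
move=> Xx; have [Xa le_ax] := ms_solid Xx (x := fun k => `|x k|) (fun k => ltac:(by rewrite normr_id)).
split => //; apply/eqP; rewrite eq_le le_ax.
by have [] := ms_solid Xa (x := x) (fun k => ltac:(by rewrite normr_id)).
Qed.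

Lemma ms_coord_le x k : X x -> `|x k| <= nrm x.
Proof.
move=> Xx; have unit_le1 j : `|@unit_vec R k j| <= 1.
  by rewrite /unit_vec; case: eqP; rewrite ?normr1 ?normr0.
have [_] := ms_mul Xx unit_le1; rewrite mul1r; apply: le_trans.
have -> : (fun j => unit_vec k j * x j) = (fun j => x k * unit_vec k j).
  by apply: funext => j; rewrite /unit_vec; case: eqP => [->|_]; rewrite ?mul1r ?mulr1 ?mul0r ?mulr0.
by rewrite ms_normZ ?ms_norm_unit_vec ?mulr1 //; apply: ms_mem_ell1 (ell1_unit_vec _ k).
Qed.

End MaximalSequenceSpace.

Definition lp_partial (R : realType) (p : R) (s t : nat -> R) (n : nat) : R :=
  \sum_(k < n) `|s k * t k| `^ p.

Section LpNorm.
Variables (R : realType) (p : R).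
Hypothesis p_gt0 : 0 < p.
Implicit Types (x s t : nat -> R) (n : nat).

Lemma lp_partial_ge0 s t n : 0 <= lp_partial p s t n.
Proof. by apply: sumr_ge0 => i _; apply: powR_ge0. Qed.

Lemma lp_partialC s t n : lp_partial p s t n = lp_partial p t s n.
Proof. by apply: eq_bigr => i _; rewrite mulrC. Qed.

Lemma lp_partialZl (a : R) s t n :
  lp_partial p (fun k => a * s k) t n = `|a| `^ p * lp_partial p s t n.
Proof. by rewrite /lp_partial mulr_sumr; apply: eq_bigr => i _; rewrite -mulrA normrM powRM. Qed.

Lemma lp_partialZr (a : R) s t n :
  lp_partial p s (fun k => a * t k) n = `|a| `^ p * lp_partial p s t n.
Proof. by rewrite lp_partialC lp_partialZl lp_partialC. Qed.

Lemma ellp_has_sup x : ellp p x ->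
  has_sup [set \sum_(k < n) `|x k| `^ p | n in [set: nat]].
Proof.
move=> [M hM]; split; first by exists (\sum_(k < 0) `|x k| `^ p), 0%N.
by exists M => _ [n _ <-].
Qed.

Lemma ellp_sup_ge0 x : ellp p x ->
  0 <= sup [set \sum_(k < n) `|x k| `^ p | n in [set: nat]].
Proof.
move=> /ellp_has_sup hs; apply: le_trans (sup_upper_bound hs (ex_intro2 _ _ 0%N I erefl)).
by rewrite big_ord0.
Qed.

Lemma sum_le_lp_norm x n : ellp p x -> \sum_(k < n) `|x k| `^ p <= lp_norm p x `^ p.
Proof.
move=> hx; rewrite /lp_norm powRVK ?gt_eqF ?ellp_sup_ge0 //.
by apply: sup_upper_bound (ellp_has_sup hx) _ _; exists n.
Qed.

Lemma lp_norm_le x (B : R) : 0 <= B ->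
  (forall n, \sum_(k < n) `|x k| `^ p <= B) -> lp_norm p x <= B `^ p^-1.
Proof.
move=> B0 hB; apply: ge0_ler_powR2; rewrite ?invr_ge0 ?(ltW p_gt0) ?ellp_sup_ge0 //.
  by exists B.
by apply: ge_sup; [exists (\sum_(k < 0) `|x k| `^ p), 0%N | move=> _ [n _ <-]].
Qed.

End LpNorm.

Section DiagonalMultipliers.
Variables (R : realType) (p : R) (Y : set (nat -> R)) (nY : (nat -> R) -> R).
Hypotheses (HY : maximal_seq_space Y nY) (p_gt0 : 0 < p).
Implicit Types (s t : nat -> R) (n : nat).

Lemma opnorm_ge_lp s t : IDL Y nY p s -> Y t -> nY t <= 1 ->
  lp_norm p (fun k => s k * t k) <= opnorm Y nY p s.
Proof.
move=> [_ [C hC]] Yt t1; apply: sup_upper_bound; last by exists t.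
split; first by exists (lp_norm p (fun k => s k * t k)), t.
exists `|C| => _ [u [Yu u1] <-]; apply: le_trans (hC u Yu) _.
apply: le_trans (ler_wpM2r (ms_norm_ge0 HY Yu) (ler_norm C)) _.
exact: ler_piMr.
Qed.

Lemma opnorm_le s (B : R) :
  (forall t, Y t -> nY t <= 1 -> lp_norm p (fun k => s k * t k) <= B) ->
  opnorm Y nY p s <= B.
Proof.
move=> hB; apply: ge_sup; last by move=> _ [t [Yt t1] <-]; apply: hB.
exists (lp_norm p (fun k => s k * 0)), (fun _ => 0) => //.
by split; [exact: ms_mem0 HY | rewrite (ms_norm0 HY)].
Qed.

Lemma opnorm_ge0 s : IDL Y nY p s -> 0 <= opnorm Y nY p s.
Proof.
move=> hs; apply: le_trans (opnorm_ge_lp hs (ms_mem0 HY) _); first exact: powR_ge0.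
by rewrite (ms_norm0 HY).
Qed.

Lemma lp_partial_le_homog s (B : R) : 0 <= B ->
  (forall t, Y t -> nY t <= 1 -> forall n, lp_partial p s t n <= B `^ p) ->
  forall t n, Y t -> lp_partial p s t n <= (B * nY t) `^ p.
Proof.
move=> B0 hB t n Yt; have [t0|tn0] := eqVneq (nY t) 0.
  rewrite t0 mulr0 powR0 ?gt_eqF // /lp_partial (ms_norm_eq0 HY Yt t0).
  by rewrite big1 // => i _; rewrite mulr0 normr0 powR0 ?gt_eqF.
have t_gt0 : 0 < nY t by rewrite lt_neqAle eq_sym tn0 (ms_norm_ge0 HY).
have t_ge0 := ltW t_gt0.
set r := nY t in t_gt0 t_ge0 *.
pose u k := r^-1 * t k.
have -> : t = (fun k => r * u k).
  by apply: funext => k; rewrite /u mulrA divff ?gt_eqF // mul1r.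
rewrite lp_partialZr (ger0_norm t_ge0) (powRM _ B0 t_ge0) [X in _ <= X]mulrC.
apply: ler_wpM2l; first exact: powR_ge0.
apply: hB; first exact: (ms_memZ HY _ Yt).
by rewrite (ms_normZ HY) // ger0_norm ?invr_ge0 ?(ms_norm_ge0 HY) // mulVf ?gt_eqF.
Qed.

Lemma lp_partial_le_opnorm_ball s t n : IDL Y nY p s -> Y t -> nY t <= 1 ->
  lp_partial p s t n <= opnorm Y nY p s `^ p.
Proof.
move=> hs Yt t1; have [hell _] := hs; rewrite /lp_partial.
apply: le_trans (sum_le_lp_norm p_gt0 n (hell t Yt)) _.
exact: ge0_ler_powR2 (ltW p_gt0) (powR_ge0 _ _) (opnorm_ge_lp hs Yt t1).
Qed.

Lemma lp_partial_le_opnorm s t n : IDL Y nY p s -> Y t ->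
  lp_partial p s t n <= (opnorm Y nY p s * nY t) `^ p.
Proof.
move=> hs; apply: lp_partial_le_homog; first exact: opnorm_ge0.
by move=> u Yu u1 m; exact: lp_partial_le_opnorm_ball.
Qed.

Lemma lp_partial_root_le_opnorm s t n : IDL Y nY p s -> Y t ->
  lp_partial p s t n `^ p^-1 <= opnorm Y nY p s * nY t.
Proof.
move=> hs Yt; rewrite ler_powRV ?lp_partial_ge0 ?mulr_ge0 ?opnorm_ge0 ?(ms_norm_ge0 HY) //.
exact: lp_partial_le_opnorm.
Qed.

Lemma IDL_opnorm_le s (B : R) : 0 <= B ->
  (forall t, Y t -> nY t <= 1 -> forall n, lp_partial p s t n <= B `^ p) ->
  IDL Y nY p s /\ opnorm Y nY p s <= B.
Proof.
move=> B0 /(lp_partial_le_homog B0) scaled.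
have hlp t : Y t -> lp_norm p (fun k => s k * t k) <= B * nY t.
  move=> Yt; rewrite -(@powRK _ p (B * nY t)) ?gt_eqF ?mulr_ge0 ?(ms_norm_ge0 HY) //.
  by apply: lp_norm_le => //; [exact: powR_ge0 | move=> n; exact: scaled].
split; first by split; [move=> t Yt; exists ((B * nY t) `^ p) => n; exact: scaled | exists B].
by apply: opnorm_le => t Yt t1; apply: le_trans (hlp t Yt) (ler_piMr B0 t1).
Qed.

End DiagonalMultipliers.

Lemma cauchy_seq_cvg (R : realType) (u : nat -> R) :
  (forall e : R, 0 < e -> exists N, forall m n, (N <= m)%N -> (N <= n)%N -> `|u m - u n| < e) ->
  exists x, forall e : R, 0 < e -> exists N, forall n, (N <= n)%N -> `|u n - x| < e.
Proof.
move=> H; have cv : cvgn u.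
  apply/cauchy_cvgP/cauchy_ballP => e e0; have [N HN] := H e e0.
  exists (u @` [set n | (N <= n)%N], u @` [set n | (N <= n)%N]) => /=.
    by split; exists N => // n /= Hn; exists n.
  by case=> a b /= [[m Hm <-] [n Hn <-]]; rewrite /ball /= distrC; exact: HN.
exists (limn u) => e e0; move: cv => /cvgrPdist_lt /(_ e e0) [N _ HN].
by exists N => n Hn; rewrite distrC; exact: HN.
Qed.

Lemma sum_cvg0 (R : realType) (v : nat -> nat -> R) :
  (forall k (e : R), 0 < e -> exists N, forall l, (N <= l)%N -> `|v l k| < e) ->
  forall n (e : R), 0 < e -> exists L, forall l, (L <= l)%N -> \sum_(k < n) `|v l k| <= e.
Proof.
move=> hv; elim=> [|n IH] e e0; first by exists 0%N => l _; rewrite big_ord0 ltW.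
have e2 : 0 < e / 2 by rewrite divr_gt0.
have [L1 h1] := IH _ e2; have [L2 h2] := hv n _ e2.
exists (maxn L1 L2) => l hl; rewrite big_ord_recr /=.
have := h1 l (leq_trans (leq_maxl _ _) hl); have := h2 l (leq_trans (leq_maxr _ _) hl).
lra.
Qed.

Section DiagonalMultiplierSpace.
Variables (R : realType) (p : R) (Y : set (nat -> R)) (nY : (nat -> R) -> R).
Hypotheses (HY : maximal_seq_space Y nY) (p_gt0 : 0 < p).
Implicit Types (s t x y : nat -> R) (n : nat).

Lemma IDL_memZ (a : R) x : IDL Y nY p x ->
  IDL Y nY p (fun k => a * x k) /\ opnorm Y nY p (fun k => a * x k) <= `|a| * opnorm Y nY p x.
Proof.
move=> hx; have x0 := opnorm_ge0 HY hx.
apply: (IDL_opnorm_le HY p_gt0 (mulr_ge0 (normr_ge0 a) x0)) => t Yt t1 n.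
rewrite lp_partialZl powRM ?(opnorm_ge0 HY) //; apply: ler_wpM2l; first exact: powR_ge0.
exact: (lp_partial_le_opnorm_ball HY p_gt0 n hx Yt t1).
Qed.

Lemma IDL_coord_le x k : IDL Y nY p x -> `|x k| <= opnorm Y nY p x.
Proof.
move=> hx; have Ye : Y (unit_vec k) by apply: (ms_mem_ell1 HY) (ell1_unit_vec _ k).
have := lp_partial_le_opnorm HY p_gt0 k.+1 hx Ye.
rewrite (ms_norm_unit_vec HY) mulr1 /lp_partial big_ord_recr /= big1 => [|i _].
  by rewrite add0r /unit_vec eqxx mulr1 ler_powR2 ?(opnorm_ge0 HY).
by rewrite unit_vec_neq ?ltn_eqF // mulr0 normr0 powR0 ?gt_eqF.
Qed.

Lemma IDL_mul (al s : nat -> R) (M : R) : IDL Y nY p s -> (forall k, `|al k| <= M) ->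
  IDL Y nY p (fun k => al k * s k) /\
  opnorm Y nY p (fun k => al k * s k) <= M * opnorm Y nY p s.
Proof.
move=> hs hM; have s0 := opnorm_ge0 HY hs.
have M0 : 0 <= M by apply: le_trans (hM 0%N).
apply: (IDL_opnorm_le HY p_gt0 (mulr_ge0 M0 s0)) => t Yt t1 n.
apply: (@le_trans _ _ (M `^ p * lp_partial p s t n)).
  rewrite /lp_partial mulr_sumr; apply: ler_sum => i _.
  rewrite -powRM // ge0_ler_powR2 ?(ltW p_gt0) //.
  by rewrite -mulrA normrM ler_wpM2r.
rewrite powRM //; apply: ler_wpM2l; first exact: powR_ge0.
exact: (lp_partial_le_opnorm_ball HY p_gt0 n hs Yt t1).
Qed.

Lemma IDL_opnorm_proj_le s n : IDL Y nY p s ->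
  opnorm Y nY p (proj_seq n s) <= opnorm Y nY p s.
Proof.
move=> hs; have s0 := opnorm_ge0 HY hs.
apply: (proj2 (IDL_opnorm_le HY p_gt0 s0 _)) => t Yt t1 m.
apply: (@le_trans _ _ (lp_partial p s t m)).
  apply: ler_sum => i _; apply: ge0_ler_powR2; rewrite ?(ltW p_gt0) //.
  by rewrite /proj_seq; case: ifP => _; rewrite ?mul0r ?normr0.
exact: (lp_partial_le_opnorm_ball HY p_gt0 m hs Yt t1).
Qed.

Section ConvexExponent.
Hypothesis p_ge1 : 1 <= p.

Lemma IDL_memD x y : IDL Y nY p x -> IDL Y nY p y ->
  IDL Y nY p (fun k => x k + y k) /\
  opnorm Y nY p (fun k => x k + y k) <= opnorm Y nY p x + opnorm Y nY p y.
Proof.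
move=> hx hy; have x0 := opnorm_ge0 HY hx; have y0 := opnorm_ge0 HY hy.
apply: (IDL_opnorm_le HY p_gt0 (addr_ge0 x0 y0)) => t Yt t1 n.
rewrite -(ler_powRV p_gt0 (lp_partial_ge0 _ _ _ _) (addr_ge0 x0 y0)).
have := minkowski_sum n (fun k => x k * t k) (fun k => y k * t k) p_ge1.
rewrite /lp_partial; under eq_bigr do rewrite -mulrDl.
move=> /le_trans; apply; apply: lerD.
  exact: le_trans (lp_partial_root_le_opnorm HY p_gt0 n hx Yt) (ler_piMr x0 t1).
exact: le_trans (lp_partial_root_le_opnorm HY p_gt0 n hy Yt) (ler_piMr y0 t1).
Qed.

Lemma IDL_memB x y : IDL Y nY p x -> IDL Y nY p y -> IDL Y nY p (fun k => x k - y k).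
Proof.
move=> hx hy; have [+ _] := IDL_memD hx (proj1 (IDL_memZ (-1) hy)).
by congr IDL; apply: funext => k; rewrite mulN1r.
Qed.

Lemma IDL_ell1 s (M : R) : (forall n, \sum_(k < n) `|s k| <= M) ->
  IDL Y nY p s /\ opnorm Y nY p s <= M.
Proof.
move=> hM; have M0 : 0 <= M by have := hM 0%N; rewrite big_ord0.
apply: (IDL_opnorm_le HY p_gt0 M0) => t Yt t1 n.
apply: le_trans (sum_powR_le n p_ge1 (fun k => normr_ge0 (s k * t k))) _.
rewrite ge0_ler_powR2 ?(ltW p_gt0) ?sumr_ge0 //; apply: le_trans (hM n).
apply: ler_sum => i _; rewrite normrM ler_piMr //.
exact: le_trans (ms_coord_le HY i Yt) t1.
Qed.

Lemma IDL_mem_ell1 s : ell1 s -> IDL Y nY p s.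
Proof. by move=> [M /IDL_ell1 []]. Qed.

Lemma IDL_opnorm_le_proj s (M : R) : (forall n, opnorm Y nY p (proj_seq n s) <= M) ->
  IDL Y nY p s /\ opnorm Y nY p s <= M.
Proof.
move=> hM; have hP n : IDL Y nY p (proj_seq n s) by apply/IDL_mem_ell1/ell1_proj_seq.
have M0 : 0 <= M := le_trans (opnorm_ge0 HY (hP 0%N)) (hM 0%N).
apply: (IDL_opnorm_le HY p_gt0 M0) => t Yt t1 n.
have -> : lp_partial p s t n = lp_partial p (proj_seq n s) t n.
  by apply: eq_bigr => i _; rewrite /proj_seq ltn_ord.
apply: le_trans (lp_partial_le_opnorm_ball HY p_gt0 n (hP n) Yt t1) _.
by rewrite ge0_ler_powR2 ?(ltW p_gt0) ?(opnorm_ge0 HY).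
Qed.

End ConvexExponent.
End DiagonalMultiplierSpace.

Section DiagonalMultiplierSpaceMaximal.
Variables (R : realType) (p : R) (Y : set (nat -> R)) (nY : (nat -> R) -> R).
Hypotheses (HY : maximal_seq_space Y nY) (p_ge1 : 1 <= p).
Let p_gt0 : 0 < p := lt_le_trans ltr01 p_ge1.
Implicit Types (s t x : nat -> R).

Lemma IDL_opnormZ (a : R) x : IDL Y nY p x ->
  opnorm Y nY p (fun k => a * x k) = `|a| * opnorm Y nY p x.
Proof.
move=> hx; have [hax le_ax] := IDL_memZ HY p_gt0 a hx.
apply/eqP; rewrite eq_le le_ax /=.
have [a0|an0] := eqVneq a 0; first by move: hax; rewrite a0 normr0 mul0r => /(opnorm_ge0 HY).
have [_] := IDL_memZ HY p_gt0 a^-1 hax.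
have -> : (fun k => a^-1 * (a * x k)) = x by apply: funext => k; rewrite mulrA mulVf // mul1r.
by rewrite normfV -ler_pdivlMl ?normr_gt0 // mulrC.
Qed.

(* Split [u m - x] through a late enough term [u l] and apply Minkowski on
   each finite section. *)
Lemma IDL_cauchy_tail (u : nat -> nat -> R) x (e : R) N : 0 < e ->
  (forall n, IDL Y nY p (u n)) ->
  (forall m n, (N <= m)%N -> (N <= n)%N -> opnorm Y nY p (fun k => u m k - u n k) < e) ->
  (forall k (d : R), 0 < d -> exists L, forall l, (L <= l)%N -> `|u l k - x k| < d) ->
  forall m, (N <= m)%N ->
    IDL Y nY p (fun k => u m k - x k) /\ opnorm Y nY p (fun k => u m k - x k) <= e + e.
Proof.
move=> e0 hu hN hx m hm; have ee0 : 0 <= e + e by rewrite addr_ge0 ?ltW.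
apply: (IDL_opnorm_le HY p_gt0 ee0) => t Yt t1 n.
have [L hL] := @sum_cvg0 _ (fun l k => u l k - x k) hx n e e0.
set l := maxn N L; have hlN : (N <= l)%N := leq_maxl _ _; have hlL : (L <= l)%N := leq_maxr _ _.
have hml := IDL_memB HY p_gt0 p_ge1 (hu m) (hu l).
rewrite -(ler_powRV p_gt0 (lp_partial_ge0 _ _ _ _) ee0).
have := minkowski_sum n (fun k => (u m k - u l k) * t k) (fun k => (u l k - x k) * t k) p_ge1.
rewrite /lp_partial; under eq_bigr do rewrite -mulrDl subrKA.
move=> /le_trans; apply; apply: lerD.
  apply: le_trans (lp_partial_root_le_opnorm HY p_gt0 n hml Yt) _.
  exact: le_trans (ler_piMr (opnorm_ge0 HY hml) t1) (ltW (hN m l hm hlN)).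
apply: le_trans (root_sum_powR_le n p_ge1 (fun k => normr_ge0 ((u l k - x k) * t k))) _.
apply: le_trans (hL l hlL); apply: ler_sum => i _; rewrite normrM.
exact: ler_piMr (normr_ge0 _) (le_trans (ms_coord_le HY i Yt) t1).
Qed.

Lemma IDL_complete : is_complete_seq_space (IDL Y nY p) (opnorm Y nY p).
Proof.
move=> u hu hc.
have hk k : exists xk, forall e : R, 0 < e -> exists N, forall n, (N <= n)%N -> `|u n k - xk| < e.
  apply: cauchy_seq_cvg => e e0; have [N hN] := hc e e0; exists N => m n hm hn.
  exact: le_lt_trans (IDL_coord_le HY p_gt0 k (IDL_memB HY p_gt0 p_ge1 (hu m) (hu n))) (hN m n hm hn).
have [x hx] := choice hk.
have tail e : 0 < e -> exists N, forall m, (N <= m)%N ->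
    IDL Y nY p (fun k => u m k - x k) /\ opnorm Y nY p (fun k => u m k - x k) <= e + e.
  by move=> e0; have [N hN] := hc e e0; exists N; apply: IDL_cauchy_tail.
have [N0 /(_ N0 (leqnn _)) [hN0x _]] := tail 1 ltr01.
exists x; split.
  have := IDL_memB HY p_gt0 p_ge1 (hu N0) hN0x.
  by congr IDL; apply: funext => k; rewrite subKr.
move=> e e0; have e3 : 0 < e / 3 by rewrite divr_gt0.
have [N hN] := tail _ e3; exists N => n hn.
by have [_ h] := hN n hn; apply: le_lt_trans h _; lra.
Qed.

Lemma IDL_maximal : maximal_seq_space (IDL Y nY p) (opnorm Y nY p).
Proof.
have mem_ell1 := IDL_mem_ell1 HY p_gt0 p_ge1.
split; [split; [|split; [|split; [|split; [|split; [|split]]]]]|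
        split; [|split; [|split; [|split; [|split; [|split]]]]]].
- by apply: mem_ell1; exists 0 => n; rewrite big1 // => i _; rewrite normr0.
- by move=> x y hx hy; have [] := IDL_memD HY p_gt0 p_ge1 hx hy.
- by move=> a x hx; have [] := IDL_memZ HY p_gt0 a hx.
- by move=> x hx; apply: opnorm_ge0.
- move=> x hx h0; apply: funext => k; apply/eqP; rewrite -normr_le0 -h0.
  exact: IDL_coord_le.
- by move=> a x hx; apply: IDL_opnormZ.
- by move=> x y hx hy; have [] := IDL_memD HY p_gt0 p_ge1 hx hy.
- exact: IDL_complete.
- exact: mem_ell1.
- by move=> s hs; exists (opnorm Y nY p s) => k; apply: IDL_coord_le.
- move=> k; apply/eqP; rewrite eq_le; apply/andP; split.
    by have [] := IDL_ell1 HY p_gt0 p_ge1 (@sum_norm_unit_vec_le1 R k).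
  have := IDL_coord_le HY p_gt0 k (mem_ell1 _ (ell1_unit_vec _ k)).
  by rewrite /unit_vec eqxx normr1.
- by move=> a s M hs hM; apply: IDL_mul.
- move=> s; split; first by move=> hs; exists (opnorm Y nY p s) => n; apply: IDL_opnorm_proj_le.
  by case=> M hM; have [] := IDL_opnorm_le_proj HY p_gt0 p_ge1 hM.
- move=> s hs; split; first by move=> n; apply: IDL_opnorm_proj_le.
  by move=> M hM; have [] := IDL_opnorm_le_proj HY p_gt0 p_ge1 hM.
Qed.

End DiagonalMultiplierSpaceMaximal.

Section FiniteHahnBanach.
Variable R : realType.
Implicit Types (N : (nat -> R) -> R) (y z v : nat -> R) (n : nat).

Definition sublinear N :=
  (forall y z, N (fun k => y k + z k) <= N y + N z) /\
  (forall (l : R) y, 0 < l -> N (fun k => l * y k) <= l * N y).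

Lemma sublinearZ N (l : R) y : sublinear N -> 0 < l -> N (fun k => l * y k) = l * N y.
Proof.
move=> [_ hZ] l0; apply/eqP; rewrite eq_le hZ //=.
have := hZ l^-1 (fun k => l * y k) ltac:(by rewrite invr_gt0).
have -> : (fun k => l^-1 * (l * y k)) = y by apply: funext => k; rewrite mulKf ?gt_eqF.
by rewrite -(ler_pM2l l0) mulrA divff ?gt_eqF // mul1r.
Qed.

Lemma sublinear0 N : sublinear N -> N (fun _ => 0) = 0.
Proof.
move=> hN; have := sublinearZ (fun _ => 0) hN (ltr0Sn R 1).
have -> : (fun k : nat => (2 : R) * 0) = fun _ => 0 by apply: funext => k; rewrite mulr0.
lra.
Qed.

Definition proj_set n y (t : R) : nat -> R := fun k => proj_seq n y k + t * unit_vec n k.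

Lemma proj_set_proj n y : proj_set n y (y n) = proj_seq n.+1 y.
Proof.
apply: funext => k; rewrite /proj_set /proj_seq /unit_vec.
case: (ltngtP k n) => [kn|kn|->] /=.
- by rewrite ltnS (ltnW kn) mulr0 addr0.
- by rewrite ltnS leqNgt kn mulr0 addr0.
- by rewrite ?ltnn ?eqxx ltnSn mulr1 add0r.
Qed.

Lemma proj_set_id n y t : proj_set n (proj_seq n y) t = proj_set n y t.
Proof. by apply: funext => k; rewrite /proj_set /proj_seq; case: (k < n)%N. Qed.

Lemma proj_setD n y z (t1 t2 : R) :
  proj_set n (fun k => y k + z k) (t1 + t2) = (fun k => proj_set n y t1 k + proj_set n z t2 k).
Proof. by apply: funext => k; rewrite /proj_set /proj_seq; case: ifP => _; ring. Qed.

Lemma proj_setZ n y (l t : R) :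
  proj_set n (fun k => l * y k) (l * t) = (fun k => l * proj_set n y t k).
Proof. by apply: funext => k; rewrite /proj_set /proj_seq; case: ifP => _; ring. Qed.

(* The slope is the supremum of the left difference quotients at [c]. *)
Lemma convex_subgradient (g : R -> R) (c : R) :
  (forall s u, s < c -> c < u -> (u - s) * g c <= (u - c) * g s + (c - s) * g u) ->
  exists a, forall t, g c + a * (t - c) <= g t.
Proof.
move=> cvx.
have slopes s u : s < c -> c < u -> (g c - g s) / (c - s) <= (g u - g c) / (u - c).
  move=> sc cu; have := cvx s u sc cu.
  rewrite ler_pdivrMr ?subr_gt0 // mulrAC ler_pdivlMr ?subr_gt0 // => h.
  rewrite -subr_ge0; rewrite -subr_ge0 in h.
  by have -> : (g u - g c) * (c - s) - (g c - g s) * (u - c) =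
               (u - c) * g s + (c - s) * g u - (u - s) * g c by ring.
pose L := [set (g c - g s) / (c - s) | s in [set s | s < c]].
have Lne : L !=set0 by exists ((g c - g (c - 1)) / (c - (c - 1))), (c - 1) => //=; lra.
have Lub u : c < u -> ubound L ((g u - g c) / (u - c)).
  by move=> cu _ [s /= sc <-]; apply: slopes.
have Lsup : has_sup L by split => //; exists ((g (c + 1) - g c) / (c + 1 - c)); apply: Lub; lra.
exists (sup L) => t; case: (ltgtP t c) => [tc|ct|->]; last by rewrite subrr mulr0 addr0.
  have := sup_upper_bound Lsup (ex_intro2 _ _ t tc erefl).
  rewrite ler_pdivrMr ?subr_gt0 // => h.
  have -> : sup L * (t - c) = - (sup L * (c - t)) by ring.
  lra.
by have := ge_sup Lne (Lub t ct); rewrite ler_pdivlMr ?subr_gt0 // => h; lra.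
Qed.

Section ExtensionStep.
Variables (N : (nat -> R) -> R) (n : nat) (a : R).
Hypotheses (hN : sublinear N) (hP : forall y, N y = N (proj_seq n.+1 y))
  (ha : forall t, a * t <= N (fun k => t * unit_vec n k)).

Definition restrict_sublinear y : R := inf [set N (proj_set n y t) - a * t | t in [set: R]].

Lemma restrict_sublinear_lb y t :
  - N (fun k => - proj_seq n y k) <= N (proj_set n y t) - a * t.
Proof.
have := ha t; have -> : (fun k => t * unit_vec n k) =
    (fun k => proj_set n y t k + - proj_seq n y k) by apply: funext => k; rewrite /proj_set; ring.
have := hN.1 (proj_set n y t) (fun k => - proj_seq n y k); lra.
Qed.

Lemma restrict_sublinear_le y t : restrict_sublinear y <= N (proj_set n y t) - a * t.
Proof.
apply: ge_inf; last by exists t.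
by exists (- N (fun k => - proj_seq n y k)) => _ [s _ <-]; apply: restrict_sublinear_lb.
Qed.

Lemma restrict_sublinear_ge y (b : R) :
  (forall t, b <= N (proj_set n y t) - a * t) -> b <= restrict_sublinear y.
Proof.
move=> hb; apply: lb_le_inf; first by exists (N (proj_set n y 0) - a * 0), 0.
by move=> _ [s _ <-]; apply: hb.
Qed.

Lemma sublinear_restrict_sublinear : sublinear restrict_sublinear.
Proof.
have [hD _] := hN; split.
  move=> y z; suff : restrict_sublinear (fun k => y k + z k) - restrict_sublinear z <=
      restrict_sublinear y by lra.
  apply: restrict_sublinear_ge => t1.
  suff : restrict_sublinear (fun k => y k + z k) - (N (proj_set n y t1) - a * t1) <=
      restrict_sublinear z by lra.
  apply: restrict_sublinear_ge => t2.
  have := restrict_sublinear_le (fun k => y k + z k) (t1 + t2).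
  rewrite proj_setD => h1; have := hD (proj_set n y t1) (proj_set n z t2); lra.
move=> l y l0.
suff : restrict_sublinear (fun k => l * y k) / l <= restrict_sublinear y by rewrite ler_pdivrMr // mulrC.
apply: restrict_sublinear_ge => t; rewrite ler_pdivrMr //.
have := restrict_sublinear_le (fun k => l * y k) (l * t).
rewrite proj_setZ (sublinearZ _ hN l0) => h.
by have -> : (N (proj_set n y t) - a * t) * l = l * N (proj_set n y t) - a * (l * t) by ring.
Qed.

Lemma restrict_sublinear_proj y : restrict_sublinear y = restrict_sublinear (proj_seq n y).
Proof.
by rewrite /restrict_sublinear; congr inf; congr image; apply: funext => t; rewrite proj_set_id.
Qed.

Lemma restrict_sublinear_dom y : restrict_sublinear y + a * y n <= N y.
Proof. have := restrict_sublinear_le y (y n); rewrite proj_set_proj -hP; lra. Qed.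

End ExtensionStep.

(* One coordinate at a time: a supporting slope [a] of [t |-> N (P_n v + t e_n)]
   at [v n] gives the last coefficient, and the induction proceeds with
   [restrict_sublinear N n a]. *)
Lemma hahn_banach_finite n : forall N, sublinear N -> (forall y, N y = N (proj_seq n y)) ->
  forall v, exists phi : nat -> R,
    (forall y, \sum_(k < n) phi k * y k <= N y) /\ \sum_(k < n) phi k * v k = N v.
Proof.
elim: n => [|n IH] N hN hP v.
  have N0 y : N y = 0.
    by rewrite hP -(sublinear0 hN); congr N; apply: funext => k.
  by exists (fun _ => 0); split => [y|]; rewrite big_ord0 N0.
pose g t := N (proj_set n v t).
have [a ha] : exists a, forall t, g (v n) + a * (t - v n) <= g t.
  apply: convex_subgradient => s u sc cu.
  have us : 0 < u - s by lra.
  rewrite /g -(sublinearZ _ hN us).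
  have -> : (fun k => (u - s) * proj_set n v (v n) k) =
      (fun k => (u - v n) * proj_set n v s k + (v n - s) * proj_set n v u k).
    by apply: funext => k; rewrite /proj_set; ring.
  apply: le_trans (hN.1 _ _) _.
  by rewrite !(sublinearZ _ hN) ?subr_gt0.
have hat t : a * t <= N (fun k => t * unit_vec n k).
  have := ha (v n + t); rewrite /g.
  have -> : proj_set n v (v n + t) = (fun k => proj_set n v (v n) k + t * unit_vec n k).
    by apply: funext => k; rewrite /proj_set; ring.
  have := hN.1 (proj_set n v (v n)) (fun k => t * unit_vec n k); lra.
have [phi [hdom heq]] := IH _ (sublinear_restrict_sublinear hN hat)
  (@restrict_sublinear_proj N n a) v.
have eNv : restrict_sublinear N n a v = N v - a * v n.
  have eg : g (v n) = N v by rewrite /g proj_set_proj -hP.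
  apply/eqP; rewrite eq_le; apply/andP; split.
    by have := restrict_sublinear_le hN hat v (v n); rewrite -/(g (v n)) eg.
  by apply: restrict_sublinear_ge => t; have := ha t; rewrite eg /g; lra.
exists (fun k => if k == n then a else phi k); split.
  move=> y; rewrite big_ord_recr /= eqxx.
  under eq_bigr do rewrite ltn_eqF //.
  have := hdom y; have := restrict_sublinear_dom hN hP hat y; lra.
rewrite big_ord_recr /= eqxx; under eq_bigr do rewrite ltn_eqF //.
rewrite heq eNv; lra.
Qed.

End FiniteHahnBanach.

Definition pconcav_costs (R : realType) (X : set (nat -> R)) (nrm : (nat -> R) -> R)
    (p : R) (tau : nat -> R) : set R :=
  [set r | exists m (xs : nat -> nat -> R), (forall i, (i < m)%N -> X (xs i)) /\
     (forall k, `|tau k| <= \sum_(i < m) `|xs i k| `^ p) /\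
     r = \sum_(i < m) nrm (xs i) `^ p].

Definition pconcav_norm (R : realType) (X : set (nat -> R)) (nrm : (nat -> R) -> R)
    (p : R) (tau : nat -> R) : R :=
  inf (pconcav_costs X nrm p tau).

Section PConcavification.
Variables (R : realType) (X : set (nat -> R)) (nrm : (nat -> R) -> R) (p : R).
Implicit Types (tau y z : nat -> R) (r : R).
Local Notation costs := (pconcav_costs X nrm p).
Local Notation Np := (pconcav_norm X nrm p).

Lemma pconcav_costs_ge0 tau r : costs tau r -> 0 <= r.
Proof. by move=> [m [xs [_ [_ ->]]]]; apply: sumr_ge0 => i _; exact: powR_ge0. Qed.

Lemma pconcav_norm_le tau r : costs tau r -> Np tau <= r.
Proof. by move=> hr; apply: ge_inf hr; exists 0 => x; exact: pconcav_costs_ge0. Qed.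

Lemma pconcav_norm_ge tau (b : R) : (exists r, costs tau r) ->
  (forall r, costs tau r -> b <= r) -> b <= Np tau.
Proof. by move=> [r hr] hb; apply: lb_le_inf; [exists r | exact: hb]. Qed.

Lemma pconcav_norm_ge0 tau : (exists r, costs tau r) -> 0 <= Np tau.
Proof. by move=> hne; apply: pconcav_norm_ge => // r; exact: pconcav_costs_ge0. Qed.

Lemma pconcav_costs1 tau x : X x -> (forall k, `|tau k| <= `|x k| `^ p) ->
  costs tau (nrm x `^ p).
Proof.
move=> Xx hx; exists 1%N, (fun _ => x); split => //.
by split; [move=> k; rewrite big_ord1; exact: hx | rewrite big_ord1].
Qed.

Lemma pconcav_costs0 : costs (fun _ => 0) 0.
Proof.
exists 0%N, (fun _ _ => 0); split => //; split; last by rewrite big_ord0.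
by move=> k; rewrite big_ord0 normr0.
Qed.

Lemma pconcav_costsD y z r1 r2 : costs y r1 -> costs z r2 ->
  costs (fun k => y k + z k) (r1 + r2).
Proof.
move=> [m1 [xs1 [h1 [c1 ->]]]] [m2 [xs2 [h2 [c2 ->]]]].
pose xs i := if (i < m1)%N then xs1 i else xs2 (i - m1)%N.
have split_sum (f : (nat -> R) -> R) :
    \sum_(i < m1 + m2) f (xs i) = \sum_(i < m1) f (xs1 i) + \sum_(i < m2) f (xs2 i).
  rewrite big_split_ord /=; congr (_ + _); apply: eq_bigr => i _; rewrite /xs /=.
    by rewrite ltn_ord.
  by rewrite ltnNge leq_addr /= addKn.
exists (m1 + m2)%N, xs; split.
  move=> i hi; rewrite /xs; case: ifP => him; first exact: h1.
  by apply: h2; rewrite ltn_subLR // leqNgt him.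
split; last by rewrite (split_sum (fun x => nrm x `^ p)).
move=> k; rewrite (split_sum (fun x => `|x k| `^ p)).
exact: le_trans (ler_normD _ _) (lerD (c1 k) (c2 k)).
Qed.

Lemma pconcav_costs_abs y z r : (forall k, `|y k| = `|z k|) -> costs y r -> costs z r.
Proof. by move=> hyz [m [xs [h1 [c1 e]]]]; exists m, xs; split => //; split => // k; rewrite -hyz. Qed.

Lemma pconcav_normD y z : (exists r, costs y r) -> (exists r, costs z r) ->
  Np (fun k => y k + z k) <= Np y + Np z.
Proof.
move=> hy hz; suff : Np (fun k => y k + z k) - Np z <= Np y by lra.
apply: (pconcav_norm_ge hy) => r1 hr1.
suff : Np (fun k => y k + z k) - r1 <= Np z by lra.
apply: (pconcav_norm_ge hz) => r2 hr2.
have := pconcav_norm_le (pconcav_costsD hr1 hr2); lra.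
Qed.

Lemma pconcav_norm0 : Np (fun _ => 0) = 0.
Proof.
apply/eqP; rewrite eq_le (pconcav_norm_le pconcav_costs0) /=.
by apply: pconcav_norm_ge0; exists 0; exact: pconcav_costs0.
Qed.

Lemma pconcav_norm_abs y z : (forall k, `|y k| = `|z k|) -> Np y = Np z.
Proof.
move=> h; rewrite /pconcav_norm; congr inf; apply/seteqP; split => r.
  exact: pconcav_costs_abs.
by apply: pconcav_costs_abs => k; rewrite h.
Qed.

Hypotheses (HX : maximal_seq_space X nrm) (p_gt0 : 0 < p).

Lemma pconcav_costsZ y r (l : R) : 0 < l -> costs y r -> costs (fun k => l * y k) (l * r).
Proof.
move=> l0 [m [xs [h1 [c1 ->]]]]; have lq0 : 0 <= l `^ p^-1 := powR_ge0 _ _.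
exists m, (fun i k => l `^ p^-1 * xs i k); split; first by move=> i hi; apply: (ms_memZ HX); exact: h1.
split=> [k|].
  rewrite normrM (ger0_norm (ltW l0)).
  under eq_bigr do rewrite normrM (ger0_norm lq0) (powRM _ lq0 (normr_ge0 _)) (powRVK (lt0r_neq0 p_gt0) (ltW l0)).
  by rewrite -mulr_sumr ler_wpM2l ?(ltW l0).
rewrite mulr_sumr; apply: eq_bigr => i _.
rewrite (ms_normZ HX _ (h1 i (ltn_ord i))) (ger0_norm lq0).
by rewrite (powRM _ lq0 (ms_norm_ge0 HX (h1 i (ltn_ord i)))) (powRVK (lt0r_neq0 p_gt0) (ltW l0)).
Qed.

Lemma pconcav_normZ_le y (l : R) : 0 < l -> (exists r, costs y r) ->
  Np (fun k => l * y k) <= l * Np y.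
Proof.
move=> l0 hy; suff : Np (fun k => l * y k) / l <= Np y by rewrite ler_pdivrMr // mulrC.
apply: (pconcav_norm_ge hy) => r hr; rewrite ler_pdivrMr // mulrC.
exact: pconcav_norm_le (pconcav_costsZ l0 hr).
Qed.

Lemma pconcav_normZ y (a : R) : (exists r, costs y r) ->
  Np (fun k => a * y k) = `|a| * Np y.
Proof.
move=> hy; have [->|an0] := eqVneq a 0.
  rewrite normr0 mul0r -[RHS]pconcav_norm0.
  by apply: pconcav_norm_abs => k; rewrite mul0r.
have ap : 0 < `|a| by rewrite normr_gt0.
rewrite (@pconcav_norm_abs _ (fun k => `|a| * y k)); last by move=> k; rewrite !normrM normr_id.
apply/eqP; rewrite eq_le pconcav_normZ_le //=.
have hy' : exists r, costs (fun k => `|a| * y k) r.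
  by have [r hr] := hy; exists (`|a| * r); exact: pconcav_costsZ ap hr.
have ai : 0 < `|a|^-1 by rewrite invr_gt0.
have := pconcav_normZ_le ai hy'.
have -> : (fun k => `|a|^-1 * (`|a| * y k)) = y by apply: funext => k; rewrite mulKf ?gt_eqF.
by move=> h; rewrite -(ler_pM2l ai) mulrA mulVf ?gt_eqF // mul1r.
Qed.

End PConcavification.

Section PConvexity.
Variables (R : realType) (X : set (nat -> R)) (nrm : (nat -> R) -> R) (p : R).
Hypotheses (HX : maximal_seq_space X nrm) (p_ge1 : 1 <= p).
Let p_gt0 : 0 < p := lt_le_trans ltr01 p_ge1.
Let pV_gt0 : 0 < p^-1 := ltac:(by rewrite invr_gt0).
Implicit Types (s tau x y : nat -> R) (xs : nat -> nat -> R).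
Local Notation costs := (pconcav_costs X nrm p).
Local Notation Np := (pconcav_norm X nrm p).

Lemma ms_mem_sum_abs m xs : (forall i, (i < m)%N -> X (xs i)) ->
  X (fun j => \sum_(i < m) `|xs i j|).
Proof.
elim: m => [|m IH] h.
  have -> : (fun j => \sum_(i < 0) `|xs i j|) = (fun _ => 0 : R).
    by apply: funext => j; rewrite big_ord0.
  exact: ms_mem0 HX.
have -> : (fun j => \sum_(i < m.+1) `|xs i j|) = (fun j => \sum_(i < m) `|xs i j| + `|xs m j|)
  by apply: funext => j; rewrite big_ord_recr.
apply: (ms_memD HX); first by apply: IH => i hi; apply/h/ltnW.
by have [] := ms_norm_abs HX (h m (ltnSn m)).
Qed.

Lemma ms_mem_lp_sum m xs : (forall i, (i < m)%N -> X (xs i)) ->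
  X (fun j => (\sum_(i < m) `|xs i j| `^ p) `^ p^-1).
Proof.
move=> h; apply: (proj1 (ms_solid HX (ms_mem_sum_abs h) _)) => j.
rewrite (ger0_norm (powR_ge0 _ _)) ger0_norm; last by apply: sumr_ge0.
exact: le_trans (root_sum_powR_le m p_ge1 (fun i => normr_ge0 (xs i j))) (lexx _).
Qed.

Lemma Xpow_costs tau : Xpow X p tau -> exists r, costs tau r.
Proof.
move=> [_ hx]; exists (nrm (fun k => `|tau k| `^ p^-1) `^ p).
apply: pconcav_costs1 hx _ => k.
by rewrite /= (ger0_norm (powR_ge0 _ _)) powRVK // gt_eqF.
Qed.

Lemma Xpow_mem_powR s : X s -> Xpow X p (fun k => `|s k| `^ p).
Proof.
move=> Xs; split.
  have [M hM] := ms_bounded HX Xs; exists (M `^ p) => k.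
  by rewrite (ger0_norm (powR_ge0 _ _)) ge0_ler_powR2 // ltW.
have -> : (fun k => `| `|s k| `^ p | `^ p^-1) = (fun k => `|s k|).
  by apply: funext => k; rewrite (ger0_norm (powR_ge0 _ _)) norm_powRK.
by have [] := ms_norm_abs HX Xs.
Qed.

Lemma Xpow_linear :
  [/\ Xpow X p (fun _ => 0),
      forall x y, Xpow X p x -> Xpow X p y -> Xpow X p (fun k => x k + y k) &
      forall (a : R) x, Xpow X p x -> Xpow X p (fun k => a * x k)].
Proof.
split.
- split; first by exists 0 => k; rewrite normr0.
  have -> : (fun k => `|(fun _ : nat => (0 : R)) k| `^ p^-1) = (fun _ => 0).
    by apply: funext => k; rewrite normr0 powR0 // gt_eqF.
  exact: ms_mem0 HX.
- move=> x y [[Mx hMx] hx] [[My hMy] hy]; split.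
    by exists (Mx + My) => k; apply: le_trans (ler_normD _ _) (lerD _ _).
  apply: (proj1 (ms_solid HX (ms_memD HX hx hy) _)) => k.
  rewrite (ger0_norm (powR_ge0 _ _)) (ger0_norm (addr_ge0 (powR_ge0 _ _) (powR_ge0 _ _))).
  apply: le_trans (powRV_subadditive p_ge1 (normr_ge0 _) (normr_ge0 _)).
  by rewrite ge0_ler_powR2 ?ler_normD // ltW.
- move=> a x [[Mx hMx] hx]; split.
    by exists (`|a| * Mx) => k; rewrite normrM ler_wpM2l.
  have -> : (fun k => `|a * x k| `^ p^-1) = (fun k => `|a| `^ p^-1 * `|x k| `^ p^-1).
    by apply: funext => k; rewrite normrM powRM.
  exact: (ms_memZ HX _ hx).
Qed.

Section ConvexityConstant.
Variable c : R.
Hypothesis hc : pconvex_const X nrm p c.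
Let c_gt0 : 0 < c := hc.1.

Lemma pconcav_costs_lower tau r : costs tau r ->
  X (fun k => `|tau k| `^ p^-1) /\ nrm (fun k => `|tau k| `^ p^-1) <= c * r `^ p^-1.
Proof.
move=> [m [xs [h1 [c1 ->]]]].
have [Xw le_w] : X (fun k => `|tau k| `^ p^-1) /\
    nrm (fun k => `|tau k| `^ p^-1) <= nrm (fun j => (\sum_(i < m) `|xs i j| `^ p) `^ p^-1).
  apply: (ms_solid HX (ms_mem_lp_sum h1)) => k.
  rewrite !(ger0_norm (powR_ge0 _ _)); exact: ge0_ler_powR2 (ltW pV_gt0) (normr_ge0 _) (c1 k).
by split => //; apply: le_trans le_w (hc.2 m xs h1).
Qed.

Lemma pconcav_norm_lower tau : (exists r, costs tau r) ->
  (nrm (fun k => `|tau k| `^ p^-1) / c) `^ p <= Np tau.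
Proof.
move=> hne; apply: (pconcav_norm_ge hne) => r hr.
have [Xt ht] := pconcav_costs_lower hr.
rewrite -(powRVK (lt0r_neq0 p_gt0) (pconcav_costs_ge0 hr)).
rewrite ge0_ler_powR2 ?divr_ge0 ?(ms_norm_ge0 HX Xt) ?(ltW c_gt0) ?(ltW p_gt0) //.
by rewrite ler_pdivrMr // mulrC.
Qed.

Lemma pconcav_norm_eq0 tau : Xpow X p tau -> Np tau = 0 -> tau = (fun _ => 0).
Proof.
move=> htau h0; have [_ Xt] := htau.
have q0 : 0 <= nrm (fun k => `|tau k| `^ p^-1) / c.
  exact: divr_ge0 (ms_norm_ge0 HX Xt) (ltW c_gt0).
have le0 := pconcav_norm_lower (Xpow_costs htau).
rewrite h0 -(powR0 (lt0r_neq0 p_gt0)) (ler_powR2 p_gt0 q0 (lexx 0)) in le0.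
rewrite ler_pdivrMr // mul0r in le0.
have /(ms_norm_eq0 HX Xt) e : nrm (fun k => `|tau k| `^ p^-1) = 0.
  by apply/eqP; rewrite eq_le le0 (ms_norm_ge0 HX Xt).
by apply: funext => k; have /= /powR_eq0_eq0/normr0_eq0 := congr1 (fun f => f k) e.
Qed.

Lemma pconcav_norm_normed : is_normed_seq_space (Xpow X p) Np.
Proof.
have [X0 XD XZ] := Xpow_linear.
split; [|split; [|split; [|split; [|split; [|split]]]]] => //.
- by move=> x hx; apply/pconcav_norm_ge0/Xpow_costs.
- exact: pconcav_norm_eq0.
- by move=> a x hx; apply/pconcav_normZ/Xpow_costs.
- by move=> x y hx hy; apply: pconcav_normD; exact: Xpow_costs.
Qed.

Lemma pconcav_norm_powR_bounds s : X s ->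
  c^-1 * nrm s <= Np (fun k => `|s k| `^ p) `^ p^-1 /\
  Np (fun k => `|s k| `^ p) `^ p^-1 <= nrm s.
Proof.
move=> Xs; have hD : costs (fun k => `|s k| `^ p) (nrm s `^ p).
  by apply: (pconcav_costs1 nrm Xs) => k; rewrite (ger0_norm (powR_ge0 _ _)).
have hne : exists r, costs (fun k => `|s k| `^ p) r by exists (nrm s `^ p).
have N0 := pconcav_norm_ge0 hne; have s0 := ms_norm_ge0 HX Xs.
split; last by rewrite ler_powRV // pconcav_norm_le.
have := pconcav_norm_lower hne.
have -> : (fun k => `| `|s k| `^ p | `^ p^-1) = (fun k => `|s k|).
  by apply: funext => k; rewrite (ger0_norm (powR_ge0 _ _)) norm_powRK.
have [_ ->] := ms_norm_abs HX Xs.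
have q0 : 0 <= nrm s / c := divr_ge0 s0 (ltW c_gt0).
move=> h; rewrite mulrC -(powRK (lt0r_neq0 p_gt0) q0).
by apply: ge0_ler_powR2 h; rewrite ?powR_ge0 // ltW.
Qed.

End ConvexityConstant.
End PConvexity.

Lemma normed_sum (R : realType) (Z : set (nat -> R)) (np : (nat -> R) -> R) n
    (f : nat -> nat -> R) :
  is_normed_seq_space Z np -> (forall i, (i < n)%N -> Z (f i)) ->
  Z (fun j => \sum_(i < n) f i j) /\ np (fun j => \sum_(i < n) f i j) <= \sum_(i < n) np (f i).
Proof.
move=> [Z0 [ZD [_ [_ [_ [npZ npD]]]]]]; elim: n => [|n IH] hf.
  have -> : (fun j => \sum_(i < 0) f i j) = (fun _ => 0 : R).
    by apply: funext => j; rewrite big_ord0.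
  split => //; rewrite big_ord0.
  have := npZ 0 _ Z0.
  have -> : (fun k : nat => (0 : R) * 0) = (fun _ => 0) by apply: funext => k; rewrite mul0r.
  by rewrite normr0 mul0r => ->.
have [IH1 IH2] := IH (fun i hi => hf i (ltnW hi)).
have -> : (fun j => \sum_(i < n.+1) f i j) = (fun j => \sum_(i < n) f i j + f n j).
  by apply: funext => j; rewrite big_ord_recr.
have hfn := hf n (ltnSn n); split; first exact: ZD.
by rewrite big_ord_recr /=; apply: le_trans (npD _ _ IH1 hfn) _; rewrite lerD2r.
Qed.

Section PConvexityCriteria.
Variables (R : realType) (X : set (nat -> R)) (nrm : (nat -> R) -> R) (p : R).
Hypotheses (HX : maximal_seq_space X nrm) (p_ge1 : 1 <= p).
Let p_gt0 : 0 < p := lt_le_trans ltr01 p_ge1.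

Lemma pconvex_of_Xpow_norm (np : (nat -> R) -> R) (c : R) :
  is_normed_seq_space (Xpow X p) np -> 0 < c ->
  (forall s, X s -> c^-1 * nrm s <= np (fun k => `|s k| `^ p) `^ p^-1 /\
                    np (fun k => `|s k| `^ p) `^ p^-1 <= nrm s) ->
  pconvex_const X nrm p c.
Proof.
move=> hn c0 hb; have np0 : forall x, Xpow X p x -> 0 <= np x by case: hn => _ [_ [_ []]].
split => // n xs hxs.
have [lo _] := hb _ (ms_mem_lp_sum HX p_ge1 hxs).
pose f i j := `|xs i j| `^ p.
have hf i : (i < n)%N -> Xpow X p (f i) by move=> hi; exact: (Xpow_mem_powR HX p_ge1 (hxs i hi)).
have e : (fun k => `|(\sum_(i < n) `|xs i k| `^ p) `^ p^-1| `^ p) = (fun j => \sum_(i < n) f i j).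
  apply: funext => j; rewrite (ger0_norm (powR_ge0 _ _)) powRVK ?gt_eqF //.
  by apply: sumr_ge0 => i _; exact: powR_ge0.
rewrite e in lo.
have [hS hS2] := normed_sum hn hf.
rewrite -ler_pdivrMl //; apply: le_trans lo _.
apply: ge0_ler_powR2; rewrite ?invr_ge0 ?(ltW p_gt0) ?np0 //.
apply: le_trans hS2 _; apply: ler_sum => i _; have hxi := hxs i (ltn_ord i).
rewrite -(ler_powRV p_gt0 (np0 _ (hf i (ltn_ord i))) (ms_norm_ge0 HX hxi)).
exact: (hb _ hxi).2.
Qed.

Lemma pconvex_of_IDL (Y : set (nat -> R)) (nY : (nat -> R) -> R) (c : R) :
  maximal_seq_space Y nY -> X = IDL Y nY p -> 0 < c ->
  (forall s, X s -> nrm s <= c * opnorm Y nY p s /\ opnorm Y nY p s <= c * nrm s) ->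
  pconvex_const X nrm p (c * c).
Proof.
move=> HY eX c0 hb; split=> [|n xs hxs]; first exact: mulr_gt0.
have [hw _] := hb _ (ms_mem_lp_sum HX p_ge1 hxs).
set S := \sum_(i < n) nrm (xs i) `^ p.
have S0 : 0 <= S by apply: sumr_ge0 => i _; exact: powR_ge0.
have B0 : 0 <= c * S `^ p^-1 := mulr_ge0 (ltW c0) (powR_ge0 _ _).
apply: le_trans hw _; rewrite -mulrA ler_wpM2l ?(ltW c0) //.
apply: (proj2 (IDL_opnorm_le HY p_gt0 B0 _)) => t Yt t1 m.
have -> : lp_partial p (fun j => (\sum_(i < n) `|xs i j| `^ p) `^ p^-1) t m =
          \sum_(i < n) lp_partial p (xs i) t m.
  rewrite /lp_partial exchange_big /=; apply: eq_bigr => k _.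
  rewrite normrM (powRM _ (normr_ge0 _) (normr_ge0 _)) (ger0_norm (powR_ge0 _ _)).
  rewrite powRVK ?gt_eqF //; last by apply: sumr_ge0 => i _; exact: powR_ge0.
  rewrite mulr_suml; apply: eq_bigr => i _.
  by rewrite normrM (powRM _ (normr_ge0 _) (normr_ge0 _)).
rewrite (powRM _ (ltW c0) (powR_ge0 _ _)) (powRVK (lt0r_neq0 p_gt0) S0) /S mulr_sumr.
apply: ler_sum => i _; have hxi : IDL Y nY p (xs i) by rewrite -eX; exact: hxs.
apply: le_trans (lp_partial_le_opnorm HY p_gt0 m hxi Yt) _.
rewrite -(powRM _ (ltW c0) (ms_norm_ge0 HX (hxs i (ltn_ord i)))).
apply: ge0_ler_powR2; rewrite ?(ltW p_gt0) ?mulr_ge0 ?(opnorm_ge0 HY hxi) ?(ms_norm_ge0 HY) //.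
exact: le_trans (ler_piMr (opnorm_ge0 HY hxi) t1) (hb _ (hxs i (ltn_ord i))).2.
Qed.

End PConvexityCriteria.

Section Duality.
Variables (R : realType) (X : set (nat -> R)) (nrm : (nat -> R) -> R) (p : R).
Hypotheses (HX : maximal_seq_space X nrm) (p_ge1 : 1 <= p).
Let p_gt0 : 0 < p := lt_le_trans ltr01 p_ge1.
Let HY : maximal_seq_space (IDL X nrm p) (opnorm X nrm p) := IDL_maximal HX p_ge1.
Local Notation Y := (IDL X nrm p).
Local Notation nY := (opnorm X nrm p).
Local Notation Np := (pconcav_norm X nrm p).
Implicit Types (s x y : nat -> R) (n : nat).

Lemma IDL_dual_ge s : X s -> IDL Y nY p s /\ opnorm Y nY p s <= nrm s.
Proof.
move=> Xs; have s0 := ms_norm_ge0 HX Xs.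
apply: (IDL_opnorm_le HY p_gt0 s0) => t ht t1 m.
rewrite lp_partialC; apply: le_trans (lp_partial_le_opnorm HX p_gt0 m ht Xs) _.
apply: ge0_ler_powR2; rewrite ?(ltW p_gt0) ?mulr_ge0 ?(opnorm_ge0 HX ht) //.
exact: ler_piMl s0 t1.
Qed.

(* The witness is [t = psi ^ (1/p)] on the first [n] coordinates. *)
Lemma weights_multiplier n (psi : nat -> R) : (forall k, 0 <= psi k) ->
  (forall x, X x -> \sum_(k < n) psi k * `|x k| `^ p <= nrm x `^ p) ->
  exists t, [/\ IDL X nrm p t, opnorm X nrm p t <= 1 &
    forall s, lp_partial p s t n = \sum_(k < n) psi k * `|s k| `^ p].
Proof.
move=> psi0 dom; pose t k := if (k < n)%N then psi k `^ p^-1 else 0.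
have term (a : R) k : (k < n)%N -> `|a * t k| `^ p = psi k * `|a| `^ p.
  move=> hk; rewrite /t hk normrM (ger0_norm (powR_ge0 _ _)).
  by rewrite (powRM _ (normr_ge0 _) (powR_ge0 _ _)) powRVK ?gt_eqF // mulrC.
have term0 (a : R) k : (n <= k)%N -> `|a * t k| `^ p = 0.
  by move=> hk; rewrite /t ltnNge hk /= mulr0 normr0 powR0 ?gt_eqF.
have [ht1 ht2] : IDL X nrm p t /\ opnorm X nrm p t <= 1.
  apply: (IDL_opnorm_le HX p_gt0 ler01) => x Xx x1 m; rewrite powR1 /lp_partial.
  apply: le_trans (@sum_le_finsupp _ (fun k => `|t k * x k| `^ p) n m _ _) _.
  - by move=> k; exact: powR_ge0.
  - by move=> k hk; rewrite mulrC term0.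
  under eq_bigr do rewrite mulrC term //.
  apply: le_trans (dom x Xx) _.
  by apply: le_trans (ge0_ler_powR2 (ltW p_gt0) (ms_norm_ge0 HX Xx) x1) _; rewrite powR1.
exists t; split => // s; apply: eq_bigr => i _; exact: term.
Qed.

Section ConvexityConstant.
Variable c : R.
Hypothesis hc : pconvex_const X nrm p c.
Let c_gt0 : 0 < c := hc.1.

Lemma sublinear_pconcav_norm_proj n : sublinear (fun y => Np (proj_seq n y)).
Proof.
have costs_proj y : exists r, pconcav_costs X nrm p (proj_seq n y) r.
  exists (nrm (fun k => `|proj_seq n y k| `^ p^-1) `^ p); apply: pconcav_costs1.
    apply: (ms_mem_ell1 HX); apply: (@ell1_finsupp _ n) => k hk.
    by rewrite /proj_seq ltnNge hk /= normr0 powR0 // invr_neq0 // gt_eqF.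
  by move=> k; rewrite (ger0_norm (powR_ge0 _ _)) powRVK // gt_eqF.
split=> [y z|l y l0].
  have -> : proj_seq n (fun k => y k + z k) = (fun k => proj_seq n y k + proj_seq n z k).
    by apply: funext => k; rewrite /proj_seq; case: (k < n)%N; rewrite ?addr0.
  exact: pconcav_normD.
have -> : proj_seq n (fun k => l * y k) = (fun k => l * proj_seq n y k).
  by apply: funext => k; rewrite /proj_seq; case: (k < n)%N; rewrite ?mulr0.
exact: pconcav_normZ_le.
Qed.

(* Hahn-Banach for [y |-> Np (P_n y)] at [|s| ^ p], with [psi = |phi|]. *)
Lemma dominated_weights s n : exists psi : nat -> R,
  [/\ forall k, 0 <= psi k,
      forall x, X x -> \sum_(k < n) psi k * `|x k| `^ p <= nrm x `^ p &
      (nrm (proj_seq n s) / c) `^ p <= \sum_(k < n) psi k * `|s k| `^ p].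
Proof.
pose v k := `|s k| `^ p.
have [phi [hdom heq]] := hahn_banach_finite (sublinear_pconcav_norm_proj n)
  (fun y => congr1 Np (esym (proj_seq_id n y))) v.
exists (fun k => `|phi k|); split=> [k|x Xx|]; first exact: normr_ge0.
  pose sg k : R := if phi k < 0 then -1 else 1.
  have -> : \sum_(k < n) `|phi k| * `|x k| `^ p = \sum_(k < n) phi k * (sg k * `|x k| `^ p).
    apply: eq_bigr => i _; rewrite mulrA /sg; case: ifP => h.
      by rewrite ltr0_norm // mulrN1.
    by rewrite ger0_norm ?mulr1 // leNgt h.
  apply: le_trans (hdom (fun k => sg k * `|x k| `^ p)) _; apply: pconcav_norm_le.
  apply: (pconcav_costs1 nrm Xx) => k; rewrite /proj_seq; case: ifP => _.
    by rewrite normrM (ger0_norm (powR_ge0 _ _)) /sg; case: ifP => _; rewrite ?normrN normr1 mul1r.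
  by rewrite normr0 powR_ge0.
apply: le_trans (_ : \sum_(k < n) phi k * v k <= _); last first.
  by apply: ler_sum => i _; rewrite ler_wpM2r ?powR_ge0 ?ler_norm.
rewrite heq; apply: le_trans (pconcav_norm_lower HX p_ge1 hc _); last first.
  exists (nrm (proj_seq n s) `^ p); apply: pconcav_costs1; first exact/(ms_mem_ell1 HX)/ell1_proj_seq.
  move=> k; rewrite /proj_seq /v; case: ifP => _; last by rewrite normr0 powR_ge0.
  by rewrite (ger0_norm (powR_ge0 _ _)).
have -> : (fun k => `|proj_seq n v k| `^ p^-1) = (fun k => `|proj_seq n s k|).
  apply: funext => k; rewrite /proj_seq /v; case: ifP => _.
    by rewrite (ger0_norm (powR_ge0 _ _)) norm_powRK.
  by rewrite !normr0 powR0 // invr_neq0 // gt_eqF.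
have [_ ->] := ms_norm_abs HX ((ms_mem_ell1 HX) _ (ell1_proj_seq n s)).
exact: lexx.
Qed.

Lemma proj_le_dual_opnorm s n : IDL Y nY p s ->
  nrm (proj_seq n s) <= c * opnorm Y nY p s.
Proof.
move=> hs; have [psi [psi0 dom lower]] := dominated_weights s n.
have [t [ht t1 ht_sum]] := weights_multiplier psi0 dom.
rewrite -ht_sum in lower; have A0 := opnorm_ge0 HY hs.
have XPs : X (proj_seq n s) by apply/(ms_mem_ell1 HX)/ell1_proj_seq.
have q0 : 0 <= nrm (proj_seq n s) / c := divr_ge0 (ms_norm_ge0 HX XPs) (ltW c_gt0).
rewrite mulrC -ler_pdivrMr // -(ler_powR2 p_gt0 q0 A0).
exact: le_trans lower (lp_partial_le_opnorm_ball HY p_gt0 n hs ht t1).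
Qed.

Lemma le_dual_opnorm s : X s -> nrm s <= c * opnorm Y nY p s.
Proof.
move=> Xs; have [hs _] := IDL_dual_ge Xs.
by apply: (ms_norm_le_proj HX Xs) => n; exact: proj_le_dual_opnorm.
Qed.

Lemma IDL_dual_mem s : IDL Y nY p s -> X s.
Proof.
move=> hs; apply/(ms_memP HX); exists (c * opnorm Y nY p s) => n.
exact: proj_le_dual_opnorm.
Qed.

End ConvexityConstant.
End Duality.

Section ConvexityModulus.
Variables (R : realType) (X : set (nat -> R)) (nrm : (nat -> R) -> R) (p : R).
Hypotheses (HX : maximal_seq_space X nrm) (p_ge1 : 1 <= p).
Let p_gt0 : 0 < p := lt_le_trans ltr01 p_ge1.
Local Notation Y := (IDL X nrm p).
Local Notation nY := (opnorm X nrm p).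

(* Testing [p]-convexity on the single vector [e_0]. *)
Lemma pconvex_const_ge1 (c : R) : pconvex_const X nrm p c -> 1 <= c.
Proof.
move=> [_ hc]; have Xe : X (unit_vec 0) by apply/(ms_mem_ell1 HX)/ell1_unit_vec.
have := hc 1%N (fun _ => unit_vec 0) (fun _ _ => Xe).
have -> : (fun j => (\sum_(i < 1) `|@unit_vec R 0 j| `^ p) `^ p^-1) = unit_vec 0.
  apply: funext => j; rewrite big_ord1 norm_powRK //.
  by rewrite ger0_norm // /unit_vec; case: eqP.
by rewrite big_ord1 (ms_norm_unit_vec HX) !powR1 mulr1.
Qed.

Lemma Mp_ge1 : pconvex X nrm p -> 1 <= Mp X nrm p.
Proof.
by move=> [c hc]; apply: lb_le_inf; [exists c | move=> d /pconvex_const_ge1].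
Qed.

Lemma le_Mp_mul (z A : R) : pconvex X nrm p -> 0 <= A ->
  (forall c, pconvex_const X nrm p c -> z <= c * A) -> z <= Mp X nrm p * A.
Proof.
move=> [c0 hc0] A0 hz; have [A_eq0|An0] := eqVneq A 0.
  by have := hz c0 hc0; rewrite A_eq0 !mulr0.
have Ap : 0 < A by rewrite lt_neqAle eq_sym An0.
rewrite -ler_pdivrMr //; apply: lb_le_inf; first by exists c0.
by move=> c hc; rewrite ler_pdivrMr //; apply: hz.
Qed.

Lemma pconvex_IDL_dual : pconvex X nrm p -> X = IDL Y nY p.
Proof.
move=> [c hc]; apply/seteqP; split => s.
  by move/(IDL_dual_ge HX p_ge1) => [].
exact: (IDL_dual_mem HX p_ge1 hc).
Qed.

Lemma pconvex_dual_opnorm_bounds s : pconvex X nrm p -> X s ->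
  nrm s <= Mp X nrm p * opnorm Y nY p s /\ opnorm Y nY p s <= nrm s.
Proof.
move=> hX Xs; have [hs ->] := IDL_dual_ge HX p_ge1 Xs; split => //.
apply: le_Mp_mul hX (opnorm_ge0 (IDL_maximal HX p_ge1) hs) _ => c hc.
exact: (le_dual_opnorm HX p_ge1 hc Xs).
Qed.

End ConvexityModulus.

Unset Implicit Arguments.

Theorem proposition1p1 (R : realType) (p : R) (X : set (nat -> R))
    (nrm : (nat -> R) -> R) :
  1 <= p -> maximal_seq_space X nrm ->
  let cond1 := pconvex X nrm p in
  let cond2 := exists (np : (nat -> R) -> R) (c : R),
      is_normed_seq_space (Xpow X p) np /\ 0 < c /\
      forall s, X s ->
        c^-1 * nrm s <= np (fun k => `|s k| `^ p) `^ p^-1 /\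
        np (fun k => `|s k| `^ p) `^ p^-1 <= nrm s in
  let cond3 := exists (Y : set (nat -> R)) (nY : (nat -> R) -> R),
      maximal_seq_space Y nY /\ X = IDL Y nY p /\
      exists c : R, 0 < c /\ forall s, X s ->
        nrm s <= c * opnorm Y nY p s /\ opnorm Y nY p s <= c * nrm s in
  (cond1 <-> cond2) /\ (cond1 <-> cond3) /\
  (cond1 ->
     let Y0 := IDL X nrm p in
     let nY0 := opnorm X nrm p in
     maximal_seq_space Y0 nY0 /\ X = IDL Y0 nY0 p /\
     forall s, X s ->
       (Mp X nrm p)^-1 * nrm s <= opnorm Y0 nY0 p s /\
       opnorm Y0 nY0 p s <= nrm s).
Proof.
move=> p1 HX; cbv zeta.
have HY0 := IDL_maximal HX p1.
have Mp_gt0 h1 : 0 < Mp X nrm p := lt_le_trans ltr01 (Mp_ge1 HX p1 h1).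
split; first split.
- move=> [c hc]; exists (pconcav_norm X nrm p), c; split; first exact: pconcav_norm_normed hc.
  by split; [exact: hc.1 | exact: pconcav_norm_powR_bounds hc].
- by move=> [np [c [hn [c0 hb]]]]; exists c; exact: (pconvex_of_Xpow_norm HX p1 hn c0 hb).
split; first split.
- move=> h1; exists (IDL X nrm p), (opnorm X nrm p).
  split=> //; split; first exact: pconvex_IDL_dual.
  exists (Mp X nrm p); split=> [|s Xs]; first exact: Mp_gt0.
  have [lo up] := pconvex_dual_opnorm_bounds HX p1 h1 Xs; split=> //.
  exact: le_trans up (ler_peMl (ms_norm_ge0 HX Xs) (Mp_ge1 HX p1 h1)).
- move=> [Y [nY [HY [eX [c [c0 hb]]]]]]; exists (c * c); exact: pconvex_of_IDL eX c0 hb.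
move=> h1; split=> //; split; first exact: pconvex_IDL_dual.
move=> s Xs; have [lo up] := pconvex_dual_opnorm_bounds HX p1 h1 Xs.
by rewrite ler_pdivrMl ?Mp_gt0.
Qed.
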